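(* Let $\mathcal G$ be a doubly connected molecular graph and let $b_0$ be a redundant blue solid edge of $\mathcal G$. Let $b$ be a diffusive edge of $\mathcal G$ joining molecules $\mathcal M_1$ and $\mathcal M_2$, and let $\mathcal M$ be another molecule of $\mathcal G$ (distinct from $\mathcal M_1,\mathcal M_2$). Form a new graph by removing $b$ and adding two diffusive edges, $b_1$ joining $\mathcal M_1$ and $\mathcal M$ and $b_2$ joining $\mathcal M$ and $\mathcal M_2$. Then $b_0$ is still redundant in the new graph.
   Context: A molecular graph is a finite multigraph whose vertices are called molecules and each of whose edges joins two distinct molecules and is either a diffusive edge or a blue solid edge (parallel edges are allowed). A molecular graph is doubly connected if there exist two disjoint sets of edges, $\mathcal B_{black}$ consisting only of diffusive edges and $\mathcal B_{blue}$ consisting only of blue solid or diffusive edges, such that each of $\mathcal B_{black}$ and $\mathcal B_{blue}$ contains a spanning tree of the set of all molecules. A blue solid edge $e$ of a doubly connected graph is redundant if the graph obtained by deleting $e$ is still doubly connected. *)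

From mathcomp Require Import all_boot.
Set Implicit Arguments. Unset Strict Implicit. Unset Printing Implicit Defensive.

(* A molecular graph on the finite set of molecules V is a finite list of
   edges (parallel edges = repeated entries). *)
Definition edge (V : finType) := (V * V * bool)%type.
Definition mgraph (V : finType) := seq (edge V).

Definition e_src {V : finType} (e : edge V) : V := e.1.1.
Definition e_dst {V : finType} (e : edge V) : V := e.1.2.
Definition diffusive {V : finType} (e : edge V) : bool := e.2.
Definition blue_solid {V : finType} (e : edge V) : bool := ~~ e.2.

Definition well_formed {V : finType} (G : mgraph V) : bool :=
  all (fun e => e_src e != e_dst e) G.

Definition edge_at {V : finType} (G : mgraph V) (i : 'I_(size G)) : edge V :=
  tnth (in_tuple G) i.

Definition sub_adj {V : finType} (G : mgraph V) (S : {set 'I_(size G)}) : rel V :=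
  fun x y => [exists i in S,
    ((e_src (edge_at i) == x) && (e_dst (edge_at i) == y)) ||
    ((e_src (edge_at i) == y) && (e_dst (edge_at i) == x))].

Definition spanning_tree {V : finType} (G : mgraph V) (S : {set 'I_(size G)}) : Prop :=
  #|S| = #|V|.-1 /\ forall x y : V, connect (sub_adj S) x y.

Definition contains_spanning_tree {V : finType} (G : mgraph V)
  (B : {set 'I_(size G)}) : Prop :=
  exists T : {set 'I_(size G)}, T \subset B /\ spanning_tree T.

Definition doubly_connected {V : finType} (G : mgraph V) : Prop :=
  exists Bblack Bblue : {set 'I_(size G)},
    [disjoint Bblack & Bblue] /\
    (forall i, i \in Bblack -> diffusive (edge_at i)) /\
    (forall i, i \in Bblue -> diffusive (edge_at i) || blue_solid (edge_at i)) /\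
    contains_spanning_tree Bblack /\ contains_spanning_tree Bblue.

Definition delete_edge {V : finType} (G : mgraph V) (e : edge V) : mgraph V :=
  rem e G.

Definition redundant {V : finType} (G : mgraph V) (e : edge V) : Prop :=
  e \in G /\ blue_solid e /\ doubly_connected G /\ doubly_connected (delete_edge G e).

(* Replacing the diffusive edge b = M1M2 by the diffusive path M1 - M - M2
   preserves double connectivity: the edge M1M takes over the role of b, and
   MM2 joins whichever of the two edge classes contained b.  A spanning tree
   avoiding b is unaffected.  If a spanning tree contains b, deleting b splits
   it into the side of M1 and the side of M2; M lies on one of them, and the new
   edge from M to the other side reconnects the two halves.  As the blue solid
   edge b0 is neither b nor a new edge, deleting b0 commutes with this
   subdivision, so b0 stays redundant. *)

From mathcomp Require Import all_boot zify.
Set Implicit Arguments. Unset Strict Implicit. Unset Printing Implicit Defensive.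

Lemma remC (T : eqType) (x y : T) (s : seq T) : rem x (rem y s) = rem y (rem x s).
Proof.
elim: s => //= z s IHs.
have [<- | zy] := eqVneq z y; have [<- | zx] := eqVneq z x; rewrite /= ?eqxx //.
all: by rewrite ?(negbTE zy) ?(negbTE zx) ?IHs.
Qed.

Lemma nth_rem_unbump (T : eqType) (x0 x : T) (s : seq T) i :
  i != index x s -> nth x0 (rem x s) (unbump (index x s) i) = nth x0 s i.
Proof.
elim: s i => [|y s IHs] i /=; first by rewrite !nth_nil.
have [-> | yx] /= := eqVneq y x; case: i => [|i] //=.
- by rewrite /unbump subn1.
- by rewrite eqSS unbumpS => /IHs.
Qed.

Section SubgraphConnectivity.
Variable V : finType.

Definition joins (e : edge V) (x y : V) : bool :=
  ((e_src e == x) && (e_dst e == y)) || ((e_src e == y) && (e_dst e == x)).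

Lemma joinsC e x y : joins e x y = joins e y x.
Proof. by rewrite /joins orbC. Qed.

Lemma sub_adjP (G : mgraph V) (S : {set 'I_(size G)}) x y :
  reflect (exists2 i, i \in S & joins (edge_at i) x y) (sub_adj S x y).
Proof. exact: exists_inP. Qed.

Lemma sub_adj_sym (G : mgraph V) (S : {set 'I_(size G)}) : symmetric (sub_adj S).
Proof.
by move=> x y; apply/sub_adjP/sub_adjP => -[i iS]; rewrite joinsC; exists i.
Qed.

Lemma connect_sub_adj_sym (G : mgraph V) (S : {set 'I_(size G)}) :
  connect_sym (sub_adj S).
Proof. exact/sym_connect_sym/sub_adj_sym. Qed.

Lemma connect_sub_adj_map (G G' : mgraph V) (S : {set 'I_(size G)})
    (S' : {set 'I_(size G')}) (f : 'I_(size G) -> 'I_(size G')) :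
  {in S, forall i, f i \in S' /\ edge_at (f i) = edge_at i} ->
  subrel (connect (sub_adj S)) (connect (sub_adj S')).
Proof.
move=> fS; apply: connect_sub => x y /sub_adjP[i /fS[fiS' fiE] ij].
by apply/connect1/sub_adjP; exists (f i); rewrite ?fiE.
Qed.

Lemma connect_sub_adjD1 (G : mgraph V) (S : {set 'I_(size G)}) e x y z :
  joins (edge_at e) x y -> connect (sub_adj S) x z ->
  connect (sub_adj (S :\ e)) z x || connect (sub_adj (S :\ e)) z y.
Proof.
move=> exy; have c_sym := connect_sub_adj_sym (S :\ e).
pose A := [pred w | connect (sub_adj (S :\ e)) w x || connect (sub_adj (S :\ e)) w y].
suff /closed_connect closedA: closed (sub_adj S) A.
  by move=> /closedA; rewrite !inE connect0 => <-.
move=> u w /sub_adjP[i iS]; have [-> uw | ie iuw] := eqVneq i e.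
  by case/orP: uw exy => /andP[/eqP<- /eqP<-] /orP[] /andP[/eqP-> /eqP->];
    rewrite !inE !connect0 ?orbT.
have cuw : connect (sub_adj (S :\ e)) u w.
  by apply/connect1/sub_adjP; exists i; rewrite // !inE ie.
have cwu : connect (sub_adj (S :\ e)) w u by rewrite c_sym.
by rewrite !inE; apply/orP/orP => -[] h; [left | right | left | right];
  apply: connect_trans h.
Qed.

Lemma spanning_tree_exchange (G G' : mgraph V) (T : {set 'I_(size G)})
    (S' : {set 'I_(size G')}) e x y :
  spanning_tree T -> joins (edge_at e) x y -> #|S'| = #|T| ->
  subrel (connect (sub_adj (T :\ e))) (connect (sub_adj S')) ->
  connect (sub_adj S') x y -> spanning_tree S'.
Proof.
move=> [cardT connT] exy cardS' lift cxy; split; first by rewrite cardS'.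
have c_sym := connect_sub_adj_sym S'.
have to_x z : connect (sub_adj S') z x.
  case/orP: (connect_sub_adjD1 exy (connT x z)) => /lift // czy.
  by apply: connect_trans czy _; rewrite c_sym.
by move=> z w; apply: connect_trans (to_x z) _; rewrite c_sym.
Qed.

End SubgraphConnectivity.

Lemma unbump_ltn_pred k i n : k < n -> i < n -> i != k -> unbump k i < n.-1.
Proof. by rewrite /unbump; case: ltnP => /= ki; rewrite ?subn1 ?subn0; lia. Qed.

Section Subdivision.
Variables (V : finType) (G : mgraph V) (b : edge V) (M1 M2 M : V).
Hypothesis bG : b \in G.

Definition subdivide : mgraph V := (M1, M, true) :: (M, M2, true) :: rem b G.

Definition idx_b : 'I_(size G) := Ordinal (etrans (index_mem b G) bG).

Definition idx_MM2 : 'I_(size subdivide) := @inord (size (rem b G)).+1 1.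

(* Edge [b] goes to position 0, where [(M1, M, true)] now stands; the other
   edges keep their order, after the two new ones. *)
Definition subdiv_idx (i : 'I_(size G)) : 'I_(size subdivide) :=
  @inord (size (rem b G)).+1 (if i == idx_b then 0 else (unbump (index b G) i).+2).

Lemma val_subdiv_idx i :
  subdiv_idx i = (if i == idx_b then 0 else (unbump (index b G) i).+2) :> nat.
Proof.
rewrite inordK //; case: eqP => // /eqP ib; rewrite -/(size _) !ltnS size_rem //.
exact: unbump_ltn_pred (ltn_ord idx_b) (ltn_ord i) ib.
Qed.

Lemma subdiv_idx_b : subdiv_idx idx_b = ord0.
Proof. by apply: ord_inj; rewrite val_subdiv_idx eqxx. Qed.

Lemma subdiv_idx_inj : injective subdiv_idx.
Proof.
move=> i j /(congr1 (@nat_of_ord _)); rewrite !val_subdiv_idx.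
have [-> | ib] := eqVneq i idx_b; have [-> | jb] := eqVneq j idx_b => // [[]].
by move/(can_in_inj unbumpK) => ij; apply/ord_inj/ij.
Qed.

Lemma subdiv_idx_neq_MM2 i : subdiv_idx i != idx_MM2.
Proof.
by apply/eqP => /(congr1 (@nat_of_ord _)); rewrite val_subdiv_idx inordK //; case: ifP.
Qed.

Lemma edge_at_b : edge_at idx_b = b.
Proof. by rewrite /edge_at (tnth_nth b) nth_index. Qed.

Lemma edge_at_M1M : edge_at (ord0 : 'I_(size subdivide)) = (M1, M, true).
Proof. by rewrite /edge_at (tnth_nth b). Qed.

Lemma edge_at_MM2 : edge_at idx_MM2 = (M, M2, true).
Proof. by rewrite /edge_at (tnth_nth b) inordK. Qed.

Lemma edge_at_subdiv_idx i : i != idx_b -> edge_at (subdiv_idx i) = edge_at i.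
Proof.
move=> ib; rewrite /edge_at !(tnth_nth b) val_subdiv_idx (negbTE ib) /=.
exact: nth_rem_unbump.
Qed.

Definition subdiv_edges (B : {set 'I_(size G)}) : {set 'I_(size subdivide)} :=
  subdiv_idx @: B :|: [set j | (j == idx_MM2) && (idx_b \in B)].

Lemma subdiv_edgesS (B B' : {set 'I_(size G)}) :
  B \subset B' -> subdiv_edges B \subset subdiv_edges B'.
Proof.
move=> sBB'; apply: setUSS; first exact: imsetS.
by apply/subsetP => j; rewrite !inE => /andP[-> /(subsetP sBB')].
Qed.

Lemma disjoint_subdiv_edges (B B' : {set 'I_(size G)}) :
  [disjoint B & B'] -> [disjoint subdiv_edges B & subdiv_edges B'].
Proof.
move=> dBB'; rewrite -setI_eq0; apply/eqP/setP => j; rewrite !inE.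
apply/negbTE; apply/andP => -[/orP[/imsetP[i iB ->] | /andP[/eqP-> bB]]].
  rewrite (negbTE (subdiv_idx_neq_MM2 i)) orbF => /imsetP[i' i'B /subdiv_idx_inj ii'].
  by rewrite -ii' (disjointFr dBB' iB) in i'B.
by rewrite eqxx (disjointFr dBB' bB) orbF =>
  /imsetP[i _ /eqP]; rewrite eq_sym (negbTE (subdiv_idx_neq_MM2 i)).
Qed.

Lemma diffusive_subdiv_edges (B : {set 'I_(size G)}) :
  {in B, forall i, diffusive (edge_at i)} ->
  {in subdiv_edges B, forall j, diffusive (edge_at j)}.
Proof.
move=> dB j; rewrite !inE => /orP[/imsetP[i iB ->] | /andP[/eqP-> _]].
  have [-> | ib] := eqVneq i idx_b; first by rewrite subdiv_idx_b edge_at_M1M.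
  by rewrite edge_at_subdiv_idx // dB.
by rewrite edge_at_MM2.
Qed.

Lemma connect_subdiv_idx (T : {set 'I_(size G)}) (S' : {set 'I_(size subdivide)}) :
  idx_b \notin T -> subdiv_idx @: T \subset S' ->
  subrel (connect (sub_adj T)) (connect (sub_adj S')).
Proof.
move=> bT sTS'; apply: (connect_sub_adj_map (f := subdiv_idx)) => i iT.
split; first by rewrite (subsetP sTS') ?imset_f.
by rewrite edge_at_subdiv_idx //; apply: contraNneq bT => <-.
Qed.

Hypothesis bM1M2 : joins b M1 M2.

Lemma spanning_tree_subdiv_exchange (T : {set 'I_(size G)}) j :
  spanning_tree T -> idx_b \in T -> j \notin subdiv_idx @: (T :\ idx_b) ->
  connect (sub_adj (subdiv_idx @: (T :\ idx_b) :|: [set j])) M1 M2 ->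
  spanning_tree (subdiv_idx @: (T :\ idx_b) :|: [set j]).
Proof.
move=> treeT bT jT c12; apply: (spanning_tree_exchange (e := idx_b) treeT _ _ _ c12).
- by rewrite edge_at_b.
- rewrite setUC cardsU1 jT card_imset; last exact: subdiv_idx_inj.
  by rewrite (cardsD1 idx_b T) bT.
- by apply: connect_subdiv_idx; [rewrite setD11 | exact: subsetUl].
Qed.

Lemma spanning_tree_subdiv (T : {set 'I_(size G)}) :
  spanning_tree T ->
  exists2 T' : {set 'I_(size subdivide)}, T' \subset subdiv_edges T & spanning_tree T'.
Proof.
move=> treeT; have [bT | bT] := boolP (idx_b \in T); last first.
  exists (subdiv_idx @: T); first exact: subsetUl.
  case: treeT => cardT connT; split; first by rewrite card_imset //; exact: subdiv_idx_inj.
  by move=> x y; apply: connect_subdiv_idx (connT x y).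
set T0 := T :\ idx_b; have bT0 : idx_b \notin T0 by rewrite setD11.
have liftT0 j : subrel (connect (sub_adj T0))
                       (connect (sub_adj (subdiv_idx @: T0 :|: [set j]))).
  exact: connect_subdiv_idx bT0 (subsetUl _ _).
have newE j x y : joins (edge_at j) x y ->
                  connect (sub_adj (subdiv_idx @: T0 :|: [set j])) x y.
  by move=> jxy; apply/connect1/sub_adjP; exists j; rewrite // !inE eqxx orbT.
have bM1M2' : joins (edge_at idx_b) M1 M2 by rewrite edge_at_b.
case/orP: (connect_sub_adjD1 bM1M2' (treeT.2 M1 M)) => [cMM1 | cMM2].
- exists (subdiv_idx @: T0 :|: [set idx_MM2]).
    apply: setUSS; first exact/imsetS/subD1set.
    by apply/subsetP => j; rewrite !inE bT andbT.
  apply: spanning_tree_subdiv_exchange => //.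
    by apply/imsetP => -[i _ /eqP]; rewrite eq_sym (negbTE (subdiv_idx_neq_MM2 i)).
  apply: connect_trans (newE _ M M2 _); last by rewrite edge_at_MM2 /joins !eqxx.
  by rewrite connect_sub_adj_sym; apply: liftT0.
- exists (subdiv_idx @: T0 :|: [set ord0]).
    by rewrite -subdiv_idx_b -imset_set1 -imsetU setUC setD1K // subsetUl.
  apply: spanning_tree_subdiv_exchange => //.
    by rewrite -subdiv_idx_b mem_imset //; exact: subdiv_idx_inj.
  apply: connect_trans (newE _ M1 M _) (liftT0 _ _ _ cMM2).
  by rewrite edge_at_M1M /joins !eqxx.
Qed.

Lemma contains_spanning_tree_subdiv (B : {set 'I_(size G)}) :
  contains_spanning_tree B -> contains_spanning_tree (subdiv_edges B).
Proof.
case=> T [sTB /spanning_tree_subdiv[T' sT'T treeT']].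
by exists T'; split; last exact: treeT'; apply: subset_trans sT'T (subdiv_edgesS sTB).
Qed.

Lemma doubly_connected_subdivide : doubly_connected G -> doubly_connected subdivide.
Proof.
case=> [Bk [Bb [dBkBb [dBk [_ [stBk stBb]]]]]].
exists (subdiv_edges Bk), (subdiv_edges Bb); split; first exact: disjoint_subdiv_edges.
split; first exact: diffusive_subdiv_edges.
split; first by move=> j _; rewrite orbN.
by split; apply: contains_spanning_tree_subdiv.
Qed.

End Subdivision.

Lemma delete_edge_subdivide (V : finType) (G : mgraph V) (b e : edge V) M1 M2 M :
  blue_solid e ->
  delete_edge (subdivide G b M1 M2 M) e = subdivide (delete_edge G e) b M1 M2 M.
Proof.
move=> eblue; have newE x y : ((x, y, true) == e) = false.
  by apply: contraNF eblue => /eqP <-.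
by rewrite /delete_edge /subdivide /= !newE remC.
Qed.

Theorem claimA2 (V : finType) (G : mgraph V) (b0 b : edge V) (M1 M2 M : V) :
  well_formed G ->
  doubly_connected G ->
  redundant G b0 ->
  b \in G -> diffusive b ->
  ((e_src b == M1) && (e_dst b == M2)) || ((e_src b == M2) && (e_dst b == M1)) ->
  M != M1 -> M != M2 ->
  redundant ((M1, M, true) :: (M, M2, true) :: delete_edge G b) b0.
Proof.
move=> _ dcG [b0G [b0blue [_ dcGb0]]] bG bdiff bM1M2 _ _.
have bb0 : b != b0 by apply: contraTneq b0blue => <-; rewrite /blue_solid negbK.
split; first by rewrite !inE (rem_mem _ b0G) ?orbT // eq_sym.
split=> //; split; first exact: doubly_connected_subdivide bG bM1M2 dcG.
rewrite delete_edge_subdivide //.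
exact: doubly_connected_subdivide (rem_mem bb0 bG) bM1M2 dcGb0.
Qed.
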